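(* Let $k\ge2$ and $r\ge1$. Let $X$ be a mixed-stable sequence with respect to the $(k,r)$-tree $T_r$ that is a whole multiple of its atomic sequence. Then there is a BST $T'$ on the keys of $T_r$ such that the average promotion of $T_r$ to $T'$ with respect to $X$ is strictly larger than $k(1-\alpha^r)$, where $\alpha=1-3^{-k}$. If $X$ is strongly-stable, then there is a BST $T'$ on the keys of $T_r$ such that the average promotion of $T_r$ to $T'$ equals $(k+1)(1-\alpha^r)+\delta$, where $\alpha=1-2^{-k}$ and $0\le\delta<\alpha^r$.
   Context: $(k,r)$-trees. Let $k\ge2$ and $r\ge0$ be integers. $T_0$ is a single node. For $r\ge1$, $T_r$ has $k$ trunk nodes $w_1,\dots,w_k$: $w_1$ is the root, $w_2$ is the right child of $w_1$, and $w_{j+1}$ is the left child of $w_j$ for $2\le j\le k-1$. The left child of $w_k$ is a single leaf (the actual leaf). Each of the remaining $k$ child positions of trunk nodes (the left child of $w_1$ and the right child of $w_j$ for $2\le j\le k$) is the root of a copy of $T_{r-1}$. Keys are $1,\dots,|T_r|$ in symmetric order. Stable sequences. Let $T$ be a full binary search tree (every inner node has exactly two children), and let $X$ be a query sequence consisting only of keys stored at leaves of $T$. For an inner node $v$, let $X_v$ be the subsequence of $X$ consisting of the queries to keys in the subtree of $v$. - The node $v$ is strongly-stable if consecutive queries of $X_v$ alternate between the left and right subtrees of $v$. - The node $v$ is weakly-stable with a left bias if its left child $u$ is an inner node and $X_v$ repeats cyclically (from some starting phase) the pattern: a query in the left subtree of $u$, then one in the right subtree of $u$, then one in the right subtree of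 $v$. - Weakly-stable with a right bias is the mirror image: $u$ is the right child of $v$, and the pattern is right subtree of $u$, left subtree of $u$, left subtree of $v$. In both weakly-stable cases $u$ is called the favored child of $v$. $X$ (and $T$) is mixed-stable if every inner node of $T$ is strongly-stable or weakly-stable, and strongly-stable if every inner node is strongly-stable. The atomic sequence is the shortest such stable sequence all of whose repetitions are again such stable sequences. $X$ is a whole multiple of it if it is a concatenation of copies of it. For such $X$, $f(x)$ is the fraction of queries equal to $x$. Promotion. For BSTs $T,T'$ on the same keys and such $X$, the average promotion of $T$ to $T'$ is $\sum_x f(x)\,(d_T(x)-d_{T'}(x))$, where $d_T(x)$ is the number of edges from the root of $T$ to $x$. *)

From mathcomp Require Import all_boot all_order all_algebra.
Set Implicit Arguments. Unset Strict Implicit. Unset Printing Implicit Defensive.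
Import Order.TTheory GRing.Theory Num.Theory.

(* Binary trees; keys are 1..tree_size t in symmetric (in-order) order.
   A node with two empty children (N E E) is a leaf; a node N l r with
   both l and r nonempty is an inner node. *)
Inductive tree := E | N of tree & tree.

Fixpoint tree_size (t : tree) : nat :=
  match t with E => 0 | N l r => (tree_size l + tree_size r).+1 end.

Definition nonempty (t : tree) : bool := if t is N _ _ then true else false.
Definition inner (l r : tree) : bool := nonempty l && nonempty r.
Definition is_inner (t : tree) : bool :=
  if t is N l r then inner l r else false.

Fixpoint depth (t : tree) (x : nat) : nat :=
  match t with
  | E => 0
  | N l r => let v := (tree_size l).+1 in
      if x == v then 0
      else if x < v then (depth l x).+1 else (depth r (x - v)).+1
  end.

Definition leaf : tree := N E E.
Fixpoint trunk (T : tree) (n : nat) : tree :=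
  match n with 0 => leaf | n'.+1 => N (trunk T n') T end.
(* w_1 = root with left child T_{r-1} and right child w_2;
   w_2..w_k is trunk T_{r-1} (k-1). *)
Fixpoint krtree (k r : nat) : tree :=
  match r with
  | 0 => leaf
  | r'.+1 => N (krtree k r') (trunk (krtree k r') k.-1)
  end.

Fixpoint leaf_key (t : tree) (o x : nat) : bool :=
  match t with
  | E => false
  | N l r => if nonempty l || nonempty r then
               leaf_key l o x || leaf_key r (o + tree_size l).+1 x
             else x == o.+1
  end.

Fixpoint all_nodes (Q : tree -> tree -> nat -> Prop) (t : tree) (o : nat) : Prop :=
  match t with
  | E => True
  | N l r => Q l r o /\ all_nodes Q l o /\ all_nodes Q r (o + tree_size l).+1
  end.

Definition sub_seq (l r : tree) (o : nat) (X : seq nat) : seq nat :=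
  [seq x <- X | (o < x) && (x <= o + (tree_size l + tree_size r).+1)].

(* consecutive queries alternate between left and right subtree *)
Definition strong_node (l r : tree) (o : nat) (X : seq nat) : Prop :=
  sorted (fun a b : bool => a != b) [seq x <= o + tree_size l | x <- sub_seq l r o X].

Definition cyclic3 (lab : nat -> nat) (s : seq nat) : Prop :=
  exists2 p, p < 3 & forall i, i < size s -> lab (nth 0 s i) = (i + p) %% 3.

(* weakly-stable with left bias: favored child u = l = N ll lr inner;
   pattern: left of u (0), right of u (1), right of v (2) *)
Definition weak_left_node (l r : tree) (o : nat) (X : seq nat) : Prop :=
  match l with
  | E => False
  | N ll lr => inner ll lr /\
      cyclic3 (fun x => if x <= o + tree_size ll then 0
                        else if x <= o + tree_size l then 1 else 2)
              (sub_seq l r o X)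
  end.

(* weakly-stable with right bias: favored child u = r = N rl rr inner;
   pattern: right of u (0), left of u (1), left of v (2) *)
Definition weak_right_node (l r : tree) (o : nat) (X : seq nat) : Prop :=
  match r with
  | E => False
  | N rl rr => inner rl rr /\
      let v := (o + tree_size l).+1 in
      cyclic3 (fun x => if x > v + (tree_size rl).+1 then 0
                        else if x > v then 1 else 2)
              (sub_seq l r o X)
  end.

Definition only_leaf_queries (T : tree) (X : seq nat) : Prop :=
  all (leaf_key T 0) X.

Definition strongly_stable (T : tree) (X : seq nat) : Prop :=
  only_leaf_queries T X /\
  all_nodes (fun l r o => inner l r -> strong_node l r o X) T 0.

Definition mixed_stable (T : tree) (X : seq nat) : Prop :=
  only_leaf_queries T X /\
  all_nodes (fun l r o => inner l r ->
     strong_node l r o X \/ weak_left_node l r o X \/ weak_right_node l r o X) T 0.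

Definition rep (A : seq nat) (j : nat) : seq nat := flatten (nseq j A).

(* A is the atomic sequence of X w.r.t. the stability notion S: the shortest
   nonempty sequence all of whose repetitions are S-stable and whose
   repetitions X follows (X is a prefix of some repetition of A). *)
Definition atomic (S : seq nat -> Prop) (X A : seq nat) : Prop :=
  [/\ 0 < size A,
      (forall j, 0 < j -> S (rep A j)),
      (exists j, prefix X (rep A j)) &
      (forall B, 0 < size B -> (forall j, 0 < j -> S (rep B j)) ->
         (exists j, prefix X (rep B j)) -> size A <= size B)].

Definition whole_multiple_of_atomic (S : seq nat -> Prop) (X : seq nat) : Prop :=
  exists A m, [/\ atomic S X A, 0 < m & X = rep A m].

Local Open Scope ring_scope.

Definition freq (X : seq nat) (x : nat) : rat := (count_mem x X)%:R / (size X)%:R.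

Definition avg_promotion (T T' : tree) (X : seq nat) : rat :=
  \sum_(1 <= x < (tree_size T).+1)
     freq X x * ((depth T x)%:R - (depth T' x)%:R).

(* The witness T' is the same in both cases and is built by recursion on r:
   the actual leaf of T_r becomes the root, which lifts it by k levels and the
   copy of T_(r-1) below w_k by one level, every other key keeping its depth,
   and inside the k copies of T_(r-1) one recurses.  Queries only hit leaves, so
   inner keys have frequency 0, and stability of the doubled atomic sequence
   forces every inner node to split the query frequency of its subtree evenly
   (strongly-stable case) or with at least a third on each side (mixed case).
   Hence the actual leaf carries exactly 2^-k (resp. at least 3^-k) of the
   frequency of T_r, and the gain g_r per unit of frequency satisfies
   g_(r+1) = (k+1) 2^-k + (1 - 2^-k) g_r, resp.
   g_(r+1) >= k 3^-k + (1 - 3^-k) g_r + (frequency of the bottom copy) since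
   g_r <= k; the last term is positive, which gives the strict bound. *)

From mathcomp Require Import all_boot all_order all_algebra zify ring lra.
Import Order.TTheory GRing.Theory Num.Theory.
Set Implicit Arguments. Unset Strict Implicit. Unset Printing Implicit Defensive.

Lemma count_split (T : Type) (p q : pred T) (s : seq T) :
  count p s = count (fun x => p x && q x) s + count (fun x => p x && ~~ q x) s.
Proof. by elim: s => //= x s ->; case: (p x); case: (q x) => /=; lia. Qed.

Lemma count_rep (P : pred nat) A m : count P (rep A m) = m * count P A.
Proof. by elim: m => //= m IH; rewrite count_cat -/(rep A m) IH mulSn. Qed.

Lemma size_rep A m : size (rep A m) = m * size A.
Proof. by rewrite -!count_predT count_rep. Qed.

Definition count_in (o n : nat) (s : seq nat) : nat :=
  count (fun y => (o < y) && (y <= o + n)) s.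

Lemma count_inD o n1 n2 s :
  count_in o (n1 + n2) s = count_in o n1 s + count_in (o + n1) n2 s.
Proof.
rewrite /count_in (@count_split _ _ (fun y => y <= o + n1)).
by congr (_ + _); apply: eq_count => y /=; lia.
Qed.

Lemma count_in_rep o n A m : count_in o n (rep A m) = m * count_in o n A.
Proof. exact: count_rep. Qed.

Lemma count_in1 o s : count_in o 1 s = count_mem o.+1 s.
Proof. by apply: eq_count => y /=; lia. Qed.

Lemma count_in_N l r o s : count_in o (tree_size (N l r)) s =
  count_in o (tree_size l) s + count_mem (o + tree_size l).+1 s
  + count_in (o + tree_size l).+1 (tree_size r) s.
Proof.
have -> : tree_size (N l r) = tree_size l + 1 + tree_size r by rewrite /=; lia.
by rewrite !count_inD count_in1 addn1 addnS.
Qed.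

Lemma size_sub_seq l r o A : size (sub_seq l r o A) = count_in o (tree_size (N l r)) A.
Proof. by rewrite size_filter. Qed.

Lemma count_sub_seq (P : pred nat) l r o A :
  count P (sub_seq l r o A) =
  count (fun x => P x && ((o < x) && (x <= o + (tree_size l + tree_size r).+1))) A.
Proof. by rewrite count_filter. Qed.

Lemma sub_seq_cat l r o A B :
  sub_seq l r o (A ++ B) = sub_seq l r o A ++ sub_seq l r o B.
Proof. exact: filter_cat. Qed.

Lemma count_sub_seq_left l r o A :
  count (fun x => x <= o + tree_size l) (sub_seq l r o A) = count_in o (tree_size l) A.
Proof. by rewrite count_sub_seq; apply: eq_count => x /=; lia. Qed.

Lemma count_sub_seq_notleft l r o A :
  count (fun x => ~~ (x <= o + tree_size l)) (sub_seq l r o A) =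
  count_mem (o + tree_size l).+1 A + count_in (o + tree_size l).+1 (tree_size r) A.
Proof.
rewrite -count_in1.
have -> : (o + tree_size l).+1 = o + tree_size l + 1 by lia.
rewrite -count_inD count_sub_seq; apply: eq_count => x /=; lia.
Qed.

Lemma count_sub_seq_right l r o A :
  count (fun x => (o + tree_size l).+1 < x) (sub_seq l r o A) =
  count_in (o + tree_size l).+1 (tree_size r) A.
Proof. by rewrite count_sub_seq; apply: eq_count => x /=; lia. Qed.

Lemma count_sub_seq_notright l r o A :
  count (fun x => ~~ ((o + tree_size l).+1 < x)) (sub_seq l r o A) =
  count_in o (tree_size l) A + count_mem (o + tree_size l).+1 A.
Proof.
rewrite -count_in1 -count_inD count_sub_seq.
by apply: eq_count => x /=; lia.
Qed.

Lemma map_negb_belast (x : bool) (t : seq bool) :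
  path (fun a c : bool => a != c) x t -> map negb (belast x t) = t.
Proof.
elim: t x => //= y t IH x /andP [xy /IH ->].
by move: xy; case: x; case: y.
Qed.

(* Alternation around the seam of [b ++ b] makes [b] cyclically alternating,
   i.e. its negation is its rotation by one. *)
Lemma alternating_count (b : seq bool) :
  sorted (fun a c : bool => a != c) (b ++ b) -> count id b = count negb b.
Proof.
case: b => // x s; rewrite [sorted _ _]/= cat_path => /andP [hs /andP [hx _]].
have /map_negb_belast : path (fun a c : bool => a != c) x (rcons s x).
  by rewrite -cats1 cat_path hs /= hx.
rewrite belast_rcons => e.
have -> : count negb (x :: s) = count id (map negb (x :: s)) by rewrite count_map.
by rewrite e -cats1 count_cat /= addn0 addnC.
Qed.

Lemma count_iota_mod3 q p j : p < 3 -> j < 3 ->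
  count (fun i => (i + p) %% 3 == j) (iota 0 (3 * q)) = q.
Proof.
move=> hp hj; elim: q => [|q IH]; first by rewrite muln0.
rewrite mulnS addnC iotaD count_cat IH add0n /=.
have e i : (3 * q + i + p) %% 3 = (i + p) %% 3 by rewrite -addnA mulnC modnMDl.
have -> : 3 * q + p = 3 * q + 0 + p by lia.
have -> : (3 * q).+1 + p = 3 * q + 1 + p by lia.
have -> : (3 * q).+2 + p = 3 * q + 2 + p by lia.
rewrite !e {e IH}.
by case: p hp => [|[|[|p]]] //= _; case: j hj => [|[|[|j]]] //= _; lia.
Qed.

Lemma cyclic3_count (lab : nat -> nat) (s : seq nat) j : j < 3 ->
  cyclic3 lab (s ++ s) -> 3 * count (fun x => lab x == j) s = size s.
Proof.
case: s => [|a s'] hj; first by [].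
set s := a :: s' => -[p hp H].
have lab_a : lab a = p %% 3 by apply: (H 0); rewrite size_cat.
have size_mod3 : size s %% 3 = 0.
  have lt_s : size s < size (s ++ s) by rewrite size_cat /s /=; lia.
  by have := H _ lt_s; rewrite nth_cat ltnn subnn lab_a; lia.
have lab_s : map lab s = [seq (i + p) %% 3 | i <- iota 0 (size s)].
  apply: (@eq_from_nth _ 0); first by rewrite !size_map size_iota.
  move=> i; rewrite size_map => hi.
  rewrite (nth_map 0) // (nth_map 0) ?size_iota // nth_iota // add0n.
  by have := H i; rewrite size_cat nth_cat hi; apply; lia.
rewrite -(count_map lab (pred1 j)) lab_s count_map.
have -> : size s = 3 * (size s %/ 3) by rewrite {1}(divn_eq (size s) 3) size_mod3 addn0 mulnC.
by rewrite count_iota_mod3.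
Qed.

Lemma strong_node_count l r o A : strong_node l r o (A ++ A) ->
  count_in o (tree_size l) A =
  count_mem (o + tree_size l).+1 A + count_in (o + tree_size l).+1 (tree_size r) A.
Proof.
rewrite /strong_node sub_seq_cat map_cat => /alternating_count.
by rewrite !count_map -(count_sub_seq_left l r o A) -(count_sub_seq_notleft l r o A).
Qed.

Lemma weak_left_node_count l r o A : weak_left_node l r o (A ++ A) ->
  3 * count_in o (tree_size l) A = 2 * size (sub_seq l r o A) /\
  3 * (count_mem (o + tree_size l).+1 A + count_in (o + tree_size l).+1 (tree_size r) A) =
    size (sub_seq l r o A).
Proof.
case: l => [|ll lr] // [_]; rewrite sub_seq_cat => H.
set l := N ll lr; set s := sub_seq l r o A.
pose lab x := if x <= o + tree_size ll then 0 else if x <= o + tree_size l then 1 else 2.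
have thirds j : j < 3 -> 3 * count (fun x => lab x == j) s = size s.
  by move=> hj; apply: cyclic3_count hj H.
have := thirds 0 isT; have := thirds 1 isT; have := thirds 2 isT.
have left01 : count (fun x => x <= o + tree_size l) s =
              count (fun x => lab x == 0) s + count (fun x => lab x == 1) s.
  rewrite (@count_split _ _ (fun x => x <= o + tree_size ll)).
  by congr (_ + _); apply: eq_count => x; rewrite /lab /l /=;
     case: leqP => h1; case: leqP => h2 //=; lia.
have notleft2 : count (fun x => ~~ (x <= o + tree_size l)) s = count (fun x => lab x == 2) s.
  by apply: eq_count => x; rewrite /lab /l /=; case: leqP => h1; case: leqP => h2 //=; lia.
rewrite -(count_sub_seq_left l r o A) -(count_sub_seq_notleft l r o A) -/s; lia.
Qed.

Lemma weak_right_node_count l r o A : weak_right_node l r o (A ++ A) ->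
  3 * (count_in o (tree_size l) A + count_mem (o + tree_size l).+1 A) = size (sub_seq l r o A) /\
  3 * count_in (o + tree_size l).+1 (tree_size r) A = 2 * size (sub_seq l r o A).
Proof.
case: r => [|rl rr] // [_]; rewrite sub_seq_cat => H.
set r := N rl rr; set s := sub_seq l r o A; set v := (o + tree_size l).+1.
pose lab x := if x > v + (tree_size rl).+1 then 0 else if x > v then 1 else 2.
have thirds j : j < 3 -> 3 * count (fun x => lab x == j) s = size s.
  by move=> hj; apply: cyclic3_count hj H.
have := thirds 0 isT; have := thirds 1 isT; have := thirds 2 isT.
have right01 : count (fun x => v < x) s =
               count (fun x => lab x == 0) s + count (fun x => lab x == 1) s.
  rewrite (@count_split _ _ (fun x => v + (tree_size rl).+1 < x)).
  by congr (_ + _); apply: eq_count => x; rewrite /lab /=;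
     case: ltnP => h1; case: ltnP => h2 //=; lia.
have notright2 : count (fun x => ~~ (v < x)) s = count (fun x => lab x == 2) s.
  by apply: eq_count => x; rewrite /lab /=; case: ltnP => h1; case: ltnP => h2 //=; lia.
rewrite -(count_sub_seq_right l r o A) -(count_sub_seq_notright l r o A) -/s -/v; lia.
Qed.

Lemma sub_all_nodes (P Q : tree -> tree -> nat -> Prop) t o :
  (forall l r o, P l r o -> Q l r o) -> all_nodes P t o -> all_nodes Q t o.
Proof. by move=> PQ; elim: t o => //= l IHl r IHr o [? [? ?]]; split; [apply: PQ | split; auto]. Qed.

Lemma all_nodes_and (P Q : tree -> tree -> nat -> Prop) t o :
  all_nodes P t o -> all_nodes Q t o -> all_nodes (fun l r o => P l r o /\ Q l r o) t o.
Proof. by elim: t o => //= l IHl r IHr o [? [? ?]] [? [? ?]]; split; [|split; auto]. Qed.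

Lemma leaf_key_range t o x : leaf_key t o x -> o < x <= o + tree_size t.
Proof. by elim: t o => //= l IHl r IHr o; case: ifP => [_ /orP [/IHl | /IHr] | ]; lia. Qed.

Lemma leaf_key_N l r o x : nonempty l || nonempty r ->
  leaf_key (N l r) o x = leaf_key l o x || leaf_key r (o + tree_size l).+1 x.
Proof. by move=> /= ->. Qed.

(* Queries outside the subtree are allowed so that the hypothesis passes to both children. *)
Lemma count_inner_key0 t o X :
  (forall x, x \in X -> [|| leaf_key t o x, x <= o | o + tree_size t < x]) ->
  all_nodes (fun l r o' => inner l r -> count_mem (o' + tree_size l).+1 X = 0) t o.
Proof.
elim: t o => // l IHl r IHr o H; split; [|split].
- move=> /andP [nl nr]; apply/count_memPn/negP => /H.
  by rewrite leaf_key_N ?nl // => /orP [/orP [/leaf_key_range | /leaf_key_range] |] /=; lia.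
- case: l IHl H => [|ll lr] IHl H //; apply: IHl => x /H; rewrite leaf_key_N //.
  by case/orP => [/orP [-> // | /leaf_key_range /= h] | /= h]; apply/orP; right; lia.
- case: r IHr H => [|rl rr] IHr H //; apply: IHr => x /H; rewrite leaf_key_N ?orbT //.
  by case/orP => [/orP [/leaf_key_range /= h | -> //] | /= h]; apply/orP; right; lia.
Qed.

Lemma rep2 A : rep A 2 = A ++ A.
Proof. by rewrite /rep /= cats0. Qed.

Lemma rep_inner_key0 T A m : 0 < m -> only_leaf_queries T (rep A m) ->
  all_nodes (fun l r o => inner l r -> count_mem (o + tree_size l).+1 A = 0) T 0.
Proof.
move=> hm /allP leaf_X.
apply: sub_all_nodes (@count_inner_key0 T 0 (rep A m) _) => [l r o key0 /key0 | x /leaf_X -> //].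
by rewrite count_rep => /eqP; rewrite muln_eq0 (gtn_eqF hm) => /eqP.
Qed.

Lemma stable_node_thirds l r o A : count_mem (o + tree_size l).+1 A = 0 ->
  strong_node l r o (A ++ A) \/ weak_left_node l r o (A ++ A) \/
    weak_right_node l r o (A ++ A) ->
  count_in o (tree_size (N l r)) A <= 3 * count_in o (tree_size l) A /\
  count_in o (tree_size (N l r)) A <= 3 * count_in (o + tree_size l).+1 (tree_size r) A.
Proof.
move=> key0; rewrite count_in_N key0 addn0.
case=> [/strong_node_count | [/weak_left_node_count | /weak_right_node_count]];
  rewrite ?size_sub_seq ?count_in_N key0 ?addn0 ?add0n; lia.
Qed.

Local Open Scope ring_scope.

Definition mass (n o : nat) (w : nat -> rat) : rat := \sum_(1 <= x < n.+1) w (o + x)%N.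

Definition third_split (w : nat -> rat) (l r : tree) (o : nat) : Prop :=
  inner l r ->
  [/\ mass (tree_size (N l r)) o w <= 3%:R * mass (tree_size l) o w,
      mass (tree_size (N l r)) o w <= 3%:R * mass (tree_size r) (o + tree_size l).+1 w
    & w (o + tree_size l).+1 = 0].

Definition even_split (w : nat -> rat) (l r : tree) (o : nat) : Prop :=
  inner l r ->
  mass (tree_size l) o w = mass (tree_size r) (o + tree_size l).+1 w /\
  w (o + tree_size l).+1 = 0.

Lemma mass_freq n o X : mass n o (freq X) = (count_in o n X)%:R / (size X)%:R.
Proof.
rewrite /mass /freq -mulr_suml; congr (_ / _); elim: n => [|n IH].
  by rewrite big_geq // /count_in (@eq_count _ _ pred0) ?count_pred0 // => y /=; lia.
by rewrite big_nat_recr //= IH -natrD -addn1 count_inD count_in1 addn1 addnS.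
Qed.

Lemma mass_freq_le c n o n' o' X : (count_in o n X <= c * count_in o' n' X)%N ->
  mass n o (freq X) <= c%:R * mass n' o' (freq X).
Proof.
by move=> h; rewrite !mass_freq mulrA -natrM ler_wpM2r ?invr_ge0 ?ler0n // ler_nat.
Qed.

Lemma freq_total T X : only_leaf_queries T X -> (0 < size X)%N ->
  mass (tree_size T) 0 (freq X) = 1.
Proof.
move=> /allP hX hs; rewrite mass_freq.
have -> : count_in 0 (tree_size T) X = size X.
  by apply/eqP; rewrite -all_count; apply/allP => x /hX /leaf_key_range.
by rewrite divff // pnatr_eq0 -lt0n.
Qed.

Lemma freq_ge0 X x : 0 <= freq X x.
Proof. by rewrite divr_ge0. Qed.

Lemma freq_rep_key0 A m x : count_mem x A = 0%N -> freq (rep A m) x = 0.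
Proof. by move=> key0; rewrite /freq count_rep key0 muln0 mul0r. Qed.

Lemma mixed_stable_third_split T A m : (0 < m)%N ->
  mixed_stable T (rep A 2) -> only_leaf_queries T (rep A m) ->
  all_nodes (third_split (freq (rep A m))) T 0.
Proof.
move=> hm [_ stable] leaf_X; rewrite rep2 in stable.
move: (all_nodes_and stable (rep_inner_key0 hm leaf_X)).
apply: sub_all_nodes => l r o [node key0] inner_lr.
have [le_left le_right] := stable_node_thirds (key0 inner_lr) (node inner_lr).
split; [| | exact: freq_rep_key0 (key0 inner_lr)];
  by apply: mass_freq_le; rewrite !count_in_rep mulnCA leq_pmul2l.
Qed.

Lemma strongly_stable_even_split T A m : (0 < m)%N ->
  strongly_stable T (rep A 2) -> only_leaf_queries T (rep A m) ->
  all_nodes (even_split (freq (rep A m))) T 0.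
Proof.
move=> hm [_ stable] leaf_X; rewrite rep2 in stable.
move: (all_nodes_and stable (rep_inner_key0 hm leaf_X)).
apply: sub_all_nodes => l r o [node key0] inner_lr.
split; last exact: freq_rep_key0 (key0 inner_lr).
move: (node inner_lr) => /strong_node_count; rewrite (key0 inner_lr) add0n => e.
by rewrite !mass_freq !count_in_rep e.
Qed.

Definition cost (t : tree) (o : nat) (w : nat -> rat) : rat :=
  \sum_(1 <= x < (tree_size t).+1) w (o + x)%N * (depth t x)%:R.

Lemma big_nat1D (R : nmodType) (F : nat -> R) (a b : nat) :
  \sum_(1 <= x < (a + b).+1) F x = \sum_(1 <= x < a.+1) F x + \sum_(1 <= x < b.+1) F (a + x)%N.
Proof.
elim: b => [|b IH]; first by rewrite addn0 [X in _ + X]big_geq // addr0.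
by rewrite addnS big_nat_recr //= IH [X in _ = _ + X]big_nat_recr //= addrA addnS.
Qed.

Lemma mass1 o w : mass 1 o w = w o.+1.
Proof. by rewrite /mass big_nat1 addn1. Qed.

Lemma massSr n o w : mass n.+1 o w = mass n o w + w (o + n.+1)%N.
Proof. by rewrite /mass big_nat_recr. Qed.

Lemma massSl n o w : mass n.+1 o w = w o.+1 + mass n o.+1 w.
Proof.
rewrite /mass big_nat_recl // addn1; congr (_ + _).
by apply: eq_bigr => i _; rewrite addSnnS.
Qed.

Lemma mass_N l r o w : mass (tree_size (N l r)) o w =
  mass (tree_size l) o w + w (o + tree_size l).+1 + mass (tree_size r) (o + tree_size l).+1 w.
Proof.
rewrite /mass /= -addnS big_nat1D [X in _ + X = _]big_nat_recl // addrA.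
by congr (_ + _ + _); [congr w | apply: eq_bigr => i _; congr w]; lia.
Qed.

Lemma cost_E o w : cost E o w = 0.
Proof. by rewrite /cost big_geq. Qed.

Lemma cost_N l r o w : cost (N l r) o w =
  mass (tree_size l) o w + cost l o w +
  (mass (tree_size r) (o + tree_size l).+1 w + cost r (o + tree_size l).+1 w).
Proof.
rewrite /cost /mass /= -addnS big_nat1D; congr (_ + _).
  rewrite -big_split /=; apply: eq_big_nat => x /andP [h1 h2].
  rewrite /= ifF; last by lia.
  by rewrite h2 -addn1 natrD mulrDr mulr1 addrC.
rewrite -big_split /= big_nat_recl // /=.
have -> : (tree_size l + 1 == (tree_size l).+1) = true by lia.
rewrite mulr0 add0r; apply: eq_big_nat => x /andP [h1 h2].
rewrite ifF; last by lia.
rewrite ifF; last by lia.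
have -> : (tree_size l + x.+1 - (tree_size l).+1)%N = x by lia.
have -> : (o + (tree_size l + x.+1))%N = ((o + tree_size l).+1 + x)%N by lia.
by rewrite mulrS mulrDr mulr1.
Qed.

Lemma cost_leaf o w : cost leaf o w = 0.
Proof. by rewrite cost_N !cost_E /mass !big_geq // !addr0. Qed.

Fixpoint add_max (t : tree) : tree := if t is N l r then N l (add_max r) else leaf.
Fixpoint add_min (t : tree) : tree := if t is N l r then N (add_min l) r else leaf.
Fixpoint rotated_trunk (S : tree) (n : nat) : tree :=
  if n is n'.+1 then N (rotated_trunk S n') S else add_min S.

(* The tree T' for [krtree k.+2 r]: the actual leaf becomes the root, w_1 the
   maximum of its left subtree, w_2 .. w_(k+1) keep their depth and right
   subtrees, and w_(k+2) becomes the minimum of the bottom copy. *)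
Fixpoint promoted (k r : nat) : tree :=
  if r is r'.+1 then N (add_max (promoted k r')) (rotated_trunk (promoted k r') k)
  else leaf.

Lemma size_add_max t : tree_size (add_max t) = (tree_size t).+1.
Proof. by elim: t => //= l _ r ->; rewrite addnS. Qed.

Lemma size_add_min t : tree_size (add_min t) = (tree_size t).+1.
Proof. by elim: t => //= l -> r _; rewrite addSn. Qed.

Lemma size_trunk T n : tree_size (trunk T n) = (n * (tree_size T).+1).+1.
Proof. by elim: n => //= n ->; rewrite mulSn; lia. Qed.

Lemma size_rotated_trunk S n : tree_size (rotated_trunk S n) = (n.+1 * (tree_size S).+1)%N.
Proof. by elim: n => [|n IH] /=; rewrite ?size_add_min ?IH; lia. Qed.

Lemma size_promoted k r : tree_size (promoted k r) = tree_size (krtree k.+2 r).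
Proof.
by elim: r => //= r IH; rewrite size_add_max size_rotated_trunk size_trunk IH; lia.
Qed.

Lemma cost_add_max t o w :
  w (o + (tree_size t).+1)%N = 0 -> cost (add_max t) o w = cost t o w.
Proof.
elim: t o => [|l _ r IH] o /= h; first by rewrite cost_leaf cost_E.
have hr : w ((o + tree_size l).+1 + (tree_size r).+1)%N = 0 by rewrite -h; congr w; lia.
by rewrite !cost_N size_add_max massSr IH // hr addr0.
Qed.

Lemma cost_add_min t o w : w o.+1 = 0 -> cost (add_min t) o w = cost t o.+1 w.
Proof.
elim: t o => [|l IH r _] o h; first by rewrite cost_leaf cost_E.
rewrite /= !cost_N size_add_min massSl IH // h add0r.
by have -> : (o + (tree_size l).+1)%N = (o.+1 + tree_size l)%N by lia.
Qed.

Lemma trunkS T n : trunk T n.+1 = N (trunk T n) T.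
Proof. by []. Qed.

Lemma all_nodes_trunkS (Q : tree -> tree -> nat -> Prop) T n o :
  all_nodes Q (trunk T n.+1) o ->
  [/\ Q (trunk T n) T o, all_nodes Q (trunk T n) o
     & all_nodes Q T (o + tree_size (trunk T n)).+1].
Proof. by case=> ? []. Qed.

Definition gain (t s : tree) (o : nat) (w : nat -> rat) : rat := cost t o w - cost s o w.

(* [rotated_trunk S n] carries the keys of [trunk T n.+1] except the actual
   leaf, which is the smallest one; hence the offset [o.+1]. *)
Definition trunk_gain (T S : tree) (n o : nat) (w : nat -> rat) : rat :=
  cost (trunk T n.+1) o w - cost (rotated_trunk S n) o.+1 w.

Section Gains.
Variables (T S : tree) (w : nat -> rat).
Hypothesis size_ST : tree_size S = tree_size T.

Lemma trunk_gain0 o : w o.+2 = 0 ->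
  trunk_gain T S 0 o w = w o.+1 + mass (tree_size T) o.+2 w + gain T S o.+2 w.
Proof.
move=> h0; rewrite /trunk_gain /gain /= cost_N cost_leaf cost_add_min // /= addn1.
by rewrite mass1; ring.
Qed.

Lemma trunk_gainS n o : trunk_gain T S n.+1 o w =
  w o.+1 + trunk_gain T S n o w + gain T S (o + tree_size (trunk T n.+1)).+1 w.
Proof.
have e : tree_size (trunk T n.+1) = (tree_size (rotated_trunk S n)).+1.
  by rewrite size_trunk size_rotated_trunk size_ST.
rewrite /trunk_gain /gain [trunk T n.+2]/= [rotated_trunk S n.+1]/= !cost_N size_ST e massSl.
have -> : (o.+1 + tree_size (rotated_trunk S n)).+1 =
          (o + (tree_size (rotated_trunk S n)).+1).+1 by lia.
ring.
Qed.

Lemma gain_trunk_root n o : w (o + tree_size T).+1 = 0 ->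
  gain (N T (trunk T n.+1)) (N (add_max S) (rotated_trunk S n)) o w =
  gain T S o w + w (o + tree_size T).+2 + trunk_gain T S n (o + tree_size T).+1 w.
Proof.
move=> h0.
have e : tree_size (trunk T n.+1) = (tree_size (rotated_trunk S n)).+1.
  by rewrite size_trunk size_rotated_trunk size_ST.
rewrite /gain /trunk_gain !cost_N size_add_max size_ST cost_add_max; last by rewrite size_ST addnS.
by rewrite massSr addnS h0 addr0 e massSl; ring.
Qed.

Hypothesis nonempty_T : nonempty T.

Lemma trunk_gain_even (g : rat) :
  (forall o, all_nodes (even_split w) T o -> gain T S o w = g * mass (tree_size T) o w) ->
  forall n o, all_nodes (even_split w) (trunk T n.+1) o ->
  w o.+1 = (2%:R ^+ n.+1)^-1 * mass (tree_size (trunk T n.+1)) o w /\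
  trunk_gain T S n o w =
    ((n.+2)%:R * (2%:R ^+ n.+1)^-1 + g * (1 - (2%:R ^+ n.+1)^-1))
    * mass (tree_size (trunk T n.+1)) o w.
Proof.
move=> gainT; elim=> [|n IH] o /all_nodes_trunkS [split_root split_trunk split_T];
  have [mass_lr root0] := split_root nonempty_T; rewrite trunkS mass_N.
  move: mass_lr root0 split_T; rewrite /= mass1 addn1 => mass_lr root0 split_T.
  rewrite trunk_gain0 // root0 gainT // -mass_lr expr1.
  by split; field.
have [leaf_w IHgain] := IH _ split_trunk.
have half : (2%:R ^+ n.+2)^-1 = 2%:R^-1 * (2%:R ^+ n.+1)^-1 :> rat.
  by rewrite exprS invfM.
rewrite trunk_gainS root0 gainT // leaf_w IHgain -mass_lr half.
by set b := (2%:R ^+ n.+1)^-1; split; field.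
Qed.

Lemma trunk_gain_third (g : rat) : (forall x, 0 <= w x) ->
  (forall o, all_nodes (third_split w) T o -> g * mass (tree_size T) o w <= gain T S o w) ->
  forall n o, all_nodes (third_split w) (trunk T n.+1) o ->
  mass (tree_size (trunk T n.+1)) o w <= 3%:R ^+ n.+1 * w o.+1 /\
  (n.+1)%:R * w o.+1 + w o.+1 / 3%:R + g * (mass (tree_size (trunk T n.+1)) o w - w o.+1)
    <= trunk_gain T S n o w.
Proof.
move=> w0 gainT; elim=> [|n IH] o /all_nodes_trunkS [split_root split_trunk split_T];
  have [le_left le_right root0] := split_root nonempty_T.
  move: le_left le_right root0 split_T.
  rewrite trunkS mass_N /= mass1 addn1 => le_left le_right root0 split_T.
  rewrite trunk_gain0 // root0 addr0 expr1 in le_left le_right *.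
  have := gainT _ split_T; have := w0 o.+1; lra.
have [le_leaf IHgain] := IH _ split_trunk.
move: le_left le_right; rewrite [trunk T n.+2]trunkS mass_N root0 trunk_gainS exprS.
have := gainT _ split_T; rewrite -[n.+2]addn1 natrD.
nra.
Qed.

End Gains.

Lemma krtreeSS k r : krtree k.+2 r.+1 = N (krtree k.+2 r) (trunk (krtree k.+2 r) k.+1).
Proof. by []. Qed.

Lemma promotedS k r :
  promoted k r.+1 = N (add_max (promoted k r)) (rotated_trunk (promoted k r) k).
Proof. by []. Qed.

Lemma nonempty_krtree k r : nonempty (krtree k r).
Proof. by case: r. Qed.

Lemma inner_krtree_root k r : inner (krtree k.+2 r) (trunk (krtree k.+2 r) k.+1).
Proof. by rewrite /inner nonempty_krtree. Qed.

Lemma one_sub_inv_expn_gt0 (b n : nat) : (1 < b)%N -> 0 < 1 - ((b%:R : rat) ^+ n.+1)^-1.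
Proof.
move=> b_gt1; have b1 : 1 < b%:R :> rat by rewrite ltr1n.
by rewrite subr_gt0 invf_lt1 ?exprn_gt0 ?(lt_trans ltr01) // exprn_egt1.
Qed.

Lemma geometric_step (c z q a M : rat) : 0 <= c -> 0 <= z -> 0 < q -> M <= q * a ->
  c * (1 - z * (1 - q^-1)) * M <= c * (1 - z) * M + c * z * a.
Proof.
move=> c0 z0 q0 le_Ma.
have le_M : q^-1 * M <= a by rewrite ler_pdivrMl.
have : 0 <= c * z * (a - q^-1 * M) by rewrite !mulr_ge0 // subr_ge0.
by rewrite -(subr_ge0 (c * _ * M)); congr (0 <= _); ring.
Qed.

Lemma gain_krtree_even k w r o : all_nodes (even_split w) (krtree k.+2 r) o ->
  gain (krtree k.+2 r) (promoted k r) o w =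
  (k.+3)%:R * (1 - (1 - (2%:R ^+ k.+2)^-1) ^+ r) * mass (tree_size (krtree k.+2 r)) o w.
Proof.
elim: r o => [|r IH] o; first by rewrite /gain /= !cost_leaf subrr expr0 subrr mulr0 mul0r.
rewrite krtreeSS => -[split_root [split_T split_trunk]].
have [mass_lr root0] := split_root (inner_krtree_root k r).
have [leaf_w gain_trunk] :=
  trunk_gain_even (size_promoted k r) (nonempty_krtree _ _) IH split_trunk.
have half : (2%:R ^+ k.+2)^-1 = 2%:R^-1 * (2%:R ^+ k.+1)^-1 :> rat by rewrite exprS invfM.
rewrite gain_trunk_root ?size_promoted // mass_N root0 IH // gain_trunk leaf_w -mass_lr half.
set b := (2%:R ^+ k.+1 : rat)^-1; rewrite exprSr; set z := (1 - 2%:R^-1 * b) ^+ r.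
by field.
Qed.

Lemma gain_krtreeS_third k w r : (forall x, 0 <= w x) ->
  (forall o, all_nodes (third_split w) (krtree k.+2 r) o ->
     (k.+2)%:R * (1 - (1 - (3%:R ^+ k.+2)^-1) ^+ r) * mass (tree_size (krtree k.+2 r)) o w
     <= gain (krtree k.+2 r) (promoted k r) o w) ->
  forall o, all_nodes (third_split w) (krtree k.+2 r.+1) o ->
  mass (tree_size (krtree k.+2 r.+1)) o w <= 3%:R ^+ k.+2 * w (o + tree_size (krtree k.+2 r)).+2 /\
  (k.+2)%:R * (1 - (1 - (3%:R ^+ k.+2)^-1) ^+ r.+1) * mass (tree_size (krtree k.+2 r.+1)) o w
    + w (o + tree_size (krtree k.+2 r)).+2 / 3%:R
    <= gain (krtree k.+2 r.+1) (promoted k r.+1) o w.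
Proof.
move=> w0 IH o; rewrite krtreeSS promotedS => -[split_root [split_T split_trunk]].
have [le_left le_right root0] := split_root (inner_krtree_root k r).
have [le_leaf gain_trunk] :=
  trunk_gain_third (size_promoted k r) (nonempty_krtree _ _) w0 IH split_trunk.
have gain_T := IH _ split_T.
rewrite gain_trunk_root ?size_promoted // mass_N root0 addr0.
rewrite mass_N root0 addr0 in le_left le_right.
move: le_left le_right le_leaf gain_trunk gain_T.
set T := krtree k.+2 r; set a := w _; set MT := mass _ o w; set Mt := mass _ _ w.
set c := (k.+2)%:R; set q := 3%:R ^+ k.+2; set z := (1 - q^-1) ^+ r.
move=> le_left le_right le_leaf gain_trunk gain_T.
have q0 : 0 < q by rewrite exprn_gt0.
have le_M : MT + Mt <= q * a by rewrite /q exprS; lra.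
have alpha0 : 0 <= 1 - q^-1 := ltW (@one_sub_inv_expn_gt0 3 k.+1 isT).
have := geometric_step (ler0n _ k.+2) (exprn_ge0 r alpha0) q0 le_M.
rewrite exprSr -/z; have -> : c = (k.+1)%:R + 1 by rewrite /c -[k.+2]addn1 natrD.
split; [done | lra].
Qed.

Lemma gain_krtree_third k w : (forall x, 0 <= w x) -> forall r o,
  all_nodes (third_split w) (krtree k.+2 r) o ->
  (k.+2)%:R * (1 - (1 - (3%:R ^+ k.+2)^-1) ^+ r) * mass (tree_size (krtree k.+2 r)) o w
    <= gain (krtree k.+2 r) (promoted k r) o w.
Proof.
move=> w0; elim=> [|r IH] o split_nodes.
  by rewrite /gain /= !cost_leaf expr0 !subrr mulr0 mul0r.
have [_ gain_ge] := gain_krtreeS_third w0 IH split_nodes.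
by apply: le_trans gain_ge; rewrite lerDl divr_ge0.
Qed.

Lemma avg_promotion_gain T T' X : tree_size T' = tree_size T ->
  avg_promotion T T' X = gain T T' 0 (freq X).
Proof.
move=> h; rewrite /avg_promotion /gain /cost h -sumrB; apply: eq_bigr => x _.
by rewrite mulrBr add0n.
Qed.

Theorem lemma8 (k r : nat) (X : seq nat) :
  (2 <= k)%N -> (1 <= r)%N ->
  (mixed_stable (krtree k r) X ->
   whole_multiple_of_atomic (mixed_stable (krtree k r)) X ->
   exists T' : tree, tree_size T' = tree_size (krtree k r) /\
     (k%:R * (1 - (1 - ((3%:R : rat) ^+ k)^-1) ^+ r) < avg_promotion (krtree k r) T' X))
  /\
  (strongly_stable (krtree k r) X ->
   whole_multiple_of_atomic (strongly_stable (krtree k r)) X ->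
   exists (T' : tree) (delta : rat), tree_size T' = tree_size (krtree k r) /\
     [/\ avg_promotion (krtree k r) T' X
           = (k.+1)%:R * (1 - (1 - ((2%:R : rat) ^+ k)^-1) ^+ r) + delta,
         0 <= delta &
         delta < (1 - ((2%:R : rat) ^+ k)^-1) ^+ r]).
Proof.
case: k => [|[|k]] // _; case: r => // r _.
have size_rep_gt0 A m : (0 < size A)%N -> (0 < m)%N -> (0 < size (rep A m))%N.
  by move=> hA hm; rewrite size_rep muln_gt0 hm.
split=> stable_X [A [m [[size_A stable_A _ _] m_gt0 eX]]];
  subst X; case: stable_X => leaf_X _.
- exists (promoted k r.+1); rewrite avg_promotion_gain size_promoted //; split=> //.
  have := mixed_stable_third_split m_gt0 (stable_A 2 isT) leaf_X.
  move=> /(gain_krtreeS_third (@freq_ge0 _) (gain_krtree_third (@freq_ge0 _) (r := r))).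
  rewrite freq_total ?size_rep_gt0 // mulr1; set a := freq _ _ => -[le_leaf gain_ge].
  have q_gt0 : 0 < 3%:R ^+ k.+2 :> rat by rewrite exprn_gt0.
  have a_gt0 : 0 < a by rewrite -(pmulr_rgt0 _ q_gt0); lra.
  by apply: lt_le_trans gain_ge; rewrite ltrDl divr_gt0.
- exists (promoted k r.+1), 0; rewrite avg_promotion_gain size_promoted //; split=> //.
  have := strongly_stable_even_split m_gt0 (stable_A 2 isT) leaf_X.
  move=> /gain_krtree_even ->; rewrite freq_total ?size_rep_gt0 // mulr1 addr0.
  by split=> //; apply/exprn_gt0/one_sub_inv_expn_gt0.
Qed.
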